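(* A finite graph is isomorphic to an induced subgraph of the power graph of some finite group if and only if it is the comparability graph of a partial order. Moreover, the group can be taken to be cyclic of squarefree order.
   Context: The power graph of a group $G$ has vertex set $G$, distinct $x,y$ adjacent iff one is a power of the other. The comparability graph of a partial order $(A,\leqslant)$ has vertex set $A$, with distinct $a,b$ adjacent iff $a\leqslant b$ or $b\leqslant a$. *)

From mathcomp Require Import all_boot all_fingroup all_solvable.
Set Implicit Arguments. Unset Strict Implicit. Unset Printing Implicit Defensive.
Local Open Scope group_scope.

Definition simple_graph (V : finType) (e : rel V) : Prop :=
  symmetric e /\ irreflexive e.

Definition is_power (gT : finGroupType) (x y : gT) : Prop :=
  exists n : nat, x = y ^+ n.

Definition power_adj (gT : finGroupType) (x y : gT) : Prop :=
  x <> y /\ (is_power x y \/ is_power y x).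

Definition induced_in_power_graph (V : finType) (e : rel V) (gT : finGroupType) : Prop :=
  exists f : V -> gT, injective f /\ forall x y : V, e x y <-> power_adj (f x) (f y).

Definition partial_order (V : finType) (le : rel V) : Prop :=
  reflexive le /\ antisymmetric le /\ transitive le.

Definition is_comparability_graph (V : finType) (e : rel V) : Prop :=
  exists le : rel V, partial_order le /\
    forall x y : V, e x y <-> (x <> y /\ (le x y \/ le y x)).

Definition squarefree (n : nat) : Prop :=
  forall p : nat, prime p -> ~ (p * p %| n)%N.

(** In a finite group the relation [x \in <[y]>] is a preorder whose
    comparability graph is the power graph; breaking ties inside its
    equivalence classes by a linear order of the vertices gives a partial order
    with the same comparability graph.
    Conversely, given a partial order on V, label the vertices with distinct
    primes and send v to the product c_v of the labels of the vertices not
    below v, read in the cyclic group Z/N where N, the product of all labels,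
    is squarefree.  Then c_v divides c_u exactly when u <= v, and in Z/N the
    class of c_u lies in the cyclic subgroup generated by c_v exactly then. *)

From mathcomp Require Import all_boot all_fingroup all_solvable zmodp.

Set Implicit Arguments. Unset Strict Implicit. Unset Printing Implicit Defensive.
Local Open Scope group_scope.

Definition comparability (V : Type) (R : rel V) (x y : V) : Prop :=
  x <> y /\ (R x y \/ R y x).

Lemma is_powerE (gT : finGroupType) (x y : gT) : is_power x y <-> x \in <[y]>.
Proof. by split=> [[n ->]|/cycleP[n ->]]; [rewrite mem_cycle | exists n]. Qed.

Lemma power_adj_comparability (V : Type) (gT : finGroupType) (f : V -> gT) :
  injective f ->
  forall x y, power_adj (f x) (f y) <-> comparability (fun u v => f u \in <[f v]>) x y.
Proof.
move=> f_inj x y; have neq_f : f x <> f y <-> x <> y.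
  by split=> neq_xy Exy; apply: neq_xy; [rewrite Exy | apply: f_inj].
split=> -[/neq_f neq_xy cmp]; split=> //.
  by case: cmp => /is_powerE; [left|right].
by case: cmp => cmp; [left|right]; apply/is_powerE.
Qed.

Section Tiebreak.

Variables (V : finType) (R : rel V).

Definition tiebreak : rel V :=
  fun x y => R x y && (R y x ==> (enum_rank x <= enum_rank y)).

Lemma comparability_tiebreak x y : comparability tiebreak x y <-> comparability R x y.
Proof.
have cmpE : (tiebreak x y || tiebreak y x) = (R x y || R y x).
  by rewrite /tiebreak; case: (R x y); case: (R y x) => //=; apply: leq_total.
split=> -[neq_xy /orP cmp]; split=> //; apply/orP; by rewrite ?cmpE // -cmpE.
Qed.

Hypotheses (R_refl : reflexive R) (R_trans : transitive R).

Lemma tiebreak_partial_order : partial_order tiebreak.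
Proof.
split; [|split].
- by move=> x; rewrite /tiebreak R_refl leqnn.
- move=> x y /andP[/andP[Rxy le_xy] /andP[Ryx le_yx]].
  apply/enum_rank_inj/val_inj/eqP; rewrite eqn_leq.
  by rewrite (implyP le_xy Ryx) (implyP le_yx Rxy).
- move=> y x z /andP[Rxy le_xy] /andP[Ryz le_yz]; rewrite /tiebreak (R_trans Rxy Ryz) /=.
  apply/implyP=> Rzx.
  have Ryx := R_trans Ryz Rzx; have Rzy := R_trans Rzx Rxy.
  exact: leq_trans (implyP le_xy Ryx) (implyP le_yz Rzy).
Qed.

Lemma comparability_graph_of_preorder (e : rel V) :
  (forall x y, e x y <-> comparability R x y) -> is_comparability_graph e.
Proof.
move=> eE; exists tiebreak; split; first exact: tiebreak_partial_order.
by move=> x y; apply: iff_trans (eE x y) (iff_sym (comparability_tiebreak x y)).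
Qed.

End Tiebreak.

Lemma comparability_graph_of_power_graph (V : finType) (e : rel V) (gT : finGroupType) :
  induced_in_power_graph e gT -> is_comparability_graph e.
Proof.
case=> f [f_inj eE]; apply: (@comparability_graph_of_preorder _ (fun u v => f u \in <[f v]>)).
- by move=> x; apply: cycle_id.
- by move=> y x z; rewrite -!cycle_subG; apply: subset_trans.
- by move=> x y; apply: iff_trans (eE x y) (power_adj_comparability f_inj x y).
Qed.

Lemma mem_cycle_inZp n (a d : nat) :
  (d %| n.+1)%N -> ((inZp a : 'I_n.+1) \in <[inZp d]>) = (d %| a)%N.
Proof.
move=> d_dvd_n; apply/cycleP/idP => [[k /(congr1 val)] | /dvdnP[k ->]].
  rewrite Zp_expg /= => /(congr1 (modn^~ d)); rewrite !(modn_dvdm _ d_dvd_n).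
  by rewrite -modnMml (modn_dvdm d d_dvd_n) modnn mul0n mod0n => /eqP.
by exists k; apply: val_inj; rewrite Zp_expg /= modnMml mulnC.
Qed.

Fixpoint prime_seq (n : nat) : nat :=
  if n is k.+1 then s2val (prime_above (prime_seq k)) else 2.

Lemma prime_seq_prime n : prime (prime_seq n).
Proof. by case: n => [|n] //=; case: prime_above. Qed.

Lemma prime_seq_inj : injective prime_seq.
Proof.
apply/incn_inj/leq_mono/(homo_ltn ltn_trans) => n /=.
by case: prime_above.
Qed.

Section DistinctPrimes.

Variables (I : finType) (p : I -> nat).
Hypotheses (p_prime : forall i, prime (p i)) (p_inj : injective p).

Lemma prime_dvd_prod_distinct (P : pred I) q :
  prime q -> (q %| \prod_(i | P i) p i)%N -> exists2 i, P i & q = p i.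
Proof.
move=> q_prime; rewrite Euclid_dvd_prod // big_has_cond => /hasP[i _ /andP[Pi]].
by rewrite dvdn_prime2 // => /eqP q_pi; exists i.
Qed.

Lemma dvd_prod_distinct (P : pred I) j : (p j %| \prod_(i | P i) p i)%N = P j.
Proof.
apply/idP/idP => [/(prime_dvd_prod_distinct (p_prime j))[i Pi /p_inj->] // | Pj].
by rewrite (bigD1 j) //= dvdn_mulr.
Qed.

Lemma squarefree_prod_distinct : squarefree (\prod_i p i).
Proof.
move=> q q_prime qq_dvd.
have [j _ q_pj] := prime_dvd_prod_distinct q_prime (dvdn_trans (dvdn_mulr q (dvdnn q)) qq_dvd).
move: qq_dvd; rewrite q_pj (bigD1 j) //= dvdn_pmul2l ?prime_gt0 //.
by rewrite dvd_prod_distinct eqxx.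
Qed.

End DistinctPrimes.

Section DivisorEncoding.

Variables (V : finType) (le : rel V).
Hypothesis le_order : partial_order le.

Let p (v : V) := prime_seq (enum_rank v).
Let p_prime v : prime (p v). Proof. exact: prime_seq_prime. Qed.
Let p_inj : injective p. Proof. by move=> u v /prime_seq_inj/val_inj/enum_rank_inj. Qed.

Let N := (\prod_v p v)%N.
Let N_gt0 : (0 < N)%N. Proof. by rewrite prodn_gt0 // => v; rewrite prime_gt0. Qed.

Definition not_below_prod (v : V) := (\prod_(w | ~~ le w v) p w)%N.

Lemma not_below_prod_dvdN v : (not_below_prod v %| N)%N.
Proof. by rewrite /N (bigID (fun w => ~~ le w v)) dvdn_mulr. Qed.

Lemma not_below_prod_dvd u v : (not_below_prod v %| not_below_prod u)%N = le u v.
Proof.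
have [le_refl [_ le_trans]] := le_order.
apply/idP/idP => [| le_uv].
  apply: contraLR => not_le_uv.
  have pu_dvd : (p u %| not_below_prod v)%N by rewrite (dvd_prod_distinct p_prime p_inj).
  by apply/negP => /(dvdn_trans pu_dvd); rewrite (dvd_prod_distinct p_prime p_inj) le_refl.
rewrite /not_below_prod [X in (_ %| X)%N](bigID (fun w => ~~ le w v)) /=.
rewrite (eq_bigl (fun w => ~~ le w v) (P1 := fun w => ~~ le w u && ~~ le w v)) ?dvdn_mulr // => w.
by apply/andb_idl/contra => le_wu; apply: le_trans le_wu le_uv.
Qed.

(* ['I_N] carries its group structure only when N is syntactically a successor. *)
Let n := N.-1.
Let nS : n.+1 = N. Proof. exact: prednK N_gt0. Qed.

Definition divisor_encoding (v : V) : 'I_n.+1 := inZp (not_below_prod v).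

Lemma divisor_encoding_cycle u v :
  (divisor_encoding u \in <[divisor_encoding v]>) = le u v.
Proof. by rewrite mem_cycle_inZp ?not_below_prod_dvd // nS not_below_prod_dvdN. Qed.

Lemma divisor_encoding_inj : injective divisor_encoding.
Proof.
have [_ [le_anti _]] := le_order.
by move=> u v Euv; apply: le_anti; rewrite -!divisor_encoding_cycle Euv cycle_id.
Qed.

Lemma induced_in_cyclic_squarefree_power_graph (e : rel V) :
  (forall x y, e x y <-> comparability le x y) ->
  exists gT : finGroupType,
    cyclic [set: gT] /\ squarefree #|gT| /\ induced_in_power_graph e gT.
Proof.
move=> eE; exists ('I_n.+1 : finGroupType); split; first by rewrite Zp_cycle cycle_cyclic.
split; first by rewrite card_ord nS; apply: squarefree_prod_distinct.
exists divisor_encoding; split; first exact: divisor_encoding_inj.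
move=> x y; apply: iff_trans (eE x y) (iff_sym _).
have := power_adj_comparability divisor_encoding_inj x y.
by rewrite /comparability /= !divisor_encoding_cycle.
Qed.

End DivisorEncoding.

Theorem mainTheorem9 (V : finType) (e : rel V) (He : simple_graph e) :
  ((exists gT : finGroupType, induced_in_power_graph e gT) <->
     is_comparability_graph e) /\
  (is_comparability_graph e ->
     exists gT : finGroupType,
       cyclic [set: gT] /\ squarefree #|gT| /\ induced_in_power_graph e gT).
Proof.
have from_order : is_comparability_graph e ->
    exists gT : finGroupType,
      cyclic [set: gT] /\ squarefree #|gT| /\ induced_in_power_graph e gT.
  by case=> le [le_order eE]; exact: (induced_in_cyclic_squarefree_power_graph le_order eE).
split=> //; split=> [[gT] | /from_order[gT [_ [_ induced]]]].
  exact: comparability_graph_of_power_graph.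
by exists gT.
Qed.
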